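(* Fix $C>0$ and $Q\in\mathbb{N}$. Let $L\in\{\mathrm{OR},\mathrm{SUM},\mathrm{OR2},\mathrm{SUM2}\}$ and let $\{\mathcal{L}_n\}$ be a family in which each $\mathcal{L}_n$ is a strip pattern set of width $C$ and density $Q$ on the $n\times n$ image $I_n$, such that $|\mathcal{L}_n|=\Theta(n^2)$ and $V(\mathcal{L}_n)=\Omega(n^3)$. Then $L(\mathcal{L}_n)=\Omega(n^2\log n)$.
   Context: Image: the $n\times n$ image $I_n$ is the set of $n^2$ pixel variables $p_{ij}$, $i,j=0,\dots,n-1$; pixel $p_{ij}$ is identified with the integer point $(i,j)\in\mathbb{R}^2$. A pattern is a nonempty subset of the image; a pattern set $\mathcal{T}=\{T_k\}_{k=1}^m$ is a nonempty set of $m$ distinct patterns, and its volume is $V(\mathcal{T})=\sum_{T\in\mathcal{T}}|T|$. Computing $\mathcal{T}$ means computing simultaneously $y_k=\sum_{p\in T_k}p$, $k=1,\dots,m$, where ''sum'' is a commutative semigroup operation on pixel values. Circuits: a circuit is a directed acyclic graph with one input node of fanin zero per pixel and $m$ output nodes $y_k$ of fanout zero; every node of nonzero fanin (a gate) may have any positive number of incoming edges and computes the semigroup sum of its in-neighbours' values. The size of a circuit is its number of edges. A circuit computes $\mathcal{T}$ if for every input assignment each $y_k$ equals $\sum_{p\in T_k}p$. $\mathrm{OR}(\mathcal{T})$ (resp. $\mathrm{SUM}(\mathcal{T})$) is the minimal size of a circuit computing $\mathcal{T}$ over $(\{0,1\},\vee)$ (resp. $(\mathbb{N},+)$). $\mathrm{OR2}(\mathcal{T})$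 (resp. $\mathrm{SUM2}(\mathcal{T})$) is the minimal number of gates of a circuit computing $\mathcal{T}$ over $(\{0,1\},\vee)$ (resp. $(\mathbb{N},+)$) in which all nodes have fanin at most $2$. Strips: for a line $l\subset\mathbb{R}^2$ and $C>0$, $s(l,C)=\{r\in\mathbb{R}^2\mid \rho(r,l)\leqslant C/2\}$ ($\rho$ Euclidean distance). A line is mostly horizontal inclined to the right if it has equation $y=ax+b$ with $0\leqslant a\leqslant1$; such a line is integer at an image of width $w$ if $a=\frac{e}{w-1}$ for some $e\in\{0,1,\dots,w-1\}$ (here $w=n$). Patterns $T\in\mathcal{M}$ are $C$-parallel if there is a family of integer lines $\{l(T)\mid T\in\mathcal{M}\}$, all with the same slope, such that $T\subset s(l(T),C)$ for all $T\in\mathcal{M}$. A pattern set $\mathcal{L}$ is a strip pattern set of width $C>0$ and density $Q\in\mathbb{N}$ if (1) for every $L\in\mathcal{L}$ there is an integer line $l$ with $L\subset s(l,C)$, and (2) every $C$-parallel subset $\mathcal{M}\subseteq\mathcal{L}$ with $\bigcap_{L\in\mathcal{M}}L\neq\varnothing$ satisfies $|\mathcal{M}|\leqslant Q$. *)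

From HB Require Import structures.
From mathcomp Require Import all_boot all_order all_algebra.
From mathcomp Require Import boolp reals exp.
Set Implicit Arguments.
Unset Strict Implicit.
Unset Printing Implicit Defensive.
Import Order.TTheory GRing.Theory Num.Theory.

Definition pixel (n : nat) : finType := ('I_n * 'I_n)%type.

Definition pattern_set (n : nat) (PS : {set {set pixel n}}) : Prop :=
  PS != set0 /\ forall T, T \in PS -> T != set0.

Definition volume (n : nat) (PS : {set {set pixel n}}) : nat :=
  \sum_(T in PS) #|T|.

(* An in-neighbour of a gate: an input node (a pixel) or an earlier gate
   (gates are numbered 0,1,... in a topological order). *)
Inductive wire (n : nat) : Type :=
| WIn of pixel n
| WGate of nat.

(* A circuit: a list of gates; gate i is the (multi)list of its in-neighbours.
   One edge per list entry, so the size (number of edges) is the total length. *)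
Definition circuit (n : nat) := seq (seq (wire n)).

Definition wire_ref (n : nat) (k : nat) (w : wire n) : bool :=
  if w is WGate j then j == k else false.

Definition wire_before (n : nat) (i : nat) (w : wire n) : bool :=
  if w is WGate j then j < i else true.

Definition wf_circuit (n : nat) (c : circuit n) : Prop :=
  forall i, i < size c ->
    (0 < size (nth [::] c i))%N /\ all (wire_before i) (nth [::] c i).

Definition fanin2 (n : nat) (c : circuit n) : bool :=
  all (fun g => size g <= 2) c.

Definition csize (n : nat) (c : circuit n) : nat := sumn (map size c).

Definition fanout0 (n : nat) (c : circuit n) (k : nat) : bool :=
  ~~ has (fun g => has (wire_ref k) g) c.

(* Evaluation over a commutative semigroup given as (op, idx); for the two
   semigroups used here, ({0,1},\/) and (N,+), idx is the neutral element and
   gates are nonempty, so the value of a gate is the semigroup sum of the values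
   of its in-neighbours. *)
Section Eval.
Variables (S : Type) (op : S -> S -> S) (idx : S) (n : nat) (x : pixel n -> S).

Definition wire_val (acc : seq S) (w : wire n) : S :=
  match w with WIn p => x p | WGate k => nth idx acc k end.

Fixpoint eval_aux (gs : circuit n) (acc : seq S) : seq S :=
  match gs with
  | [::] => acc
  | g :: gs' => eval_aux gs' (rcons acc (foldr op idx (map (wire_val acc) g)))
  end.

Definition gate_values (c : circuit n) : seq S := eval_aux c [::].
End Eval.

Definition or_sum (n : nat) (x : pixel n -> bool) (T : {set pixel n}) : bool :=
  [exists p in T, x p].
Definition nat_sum (n : nat) (x : pixel n -> nat) (T : {set pixel n}) : nat :=
  \sum_(p in T) x p.

(* c computes PS over ({0,1},\/): each pattern has an output gate of fanout 0
   computing its OR for every input assignment.  (Distinct patterns give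
   distinct functions, so these output gates are automatically distinct.) *)
Definition computes_or (n : nat) (c : circuit n) (PS : {set {set pixel n}}) : Prop :=
  forall T, T \in PS -> exists2 g, g < size c &
    fanout0 c g /\ forall x : pixel n -> bool,
      nth false (gate_values orb false x c) g = or_sum x T.

Definition computes_sum (n : nat) (c : circuit n) (PS : {set {set pixel n}}) : Prop :=
  forall T, T \in PS -> exists2 g, g < size c &
    fanout0 c g /\ forall x : pixel n -> nat,
      nth 0%N (gate_values addn 0%N x c) g = nat_sum x T.

(* least natural number satisfying P (0 if none) *)
Definition min_nat (P : nat -> Prop) : nat :=
  match pselect (exists k, P k) with
  | left h =>
      @ex_minn (fun k => `[< P k >])
        (let: ex_intro k hk := h in ex_intro _ k (asboolT hk))
  | right _ => 0%N
  end.

Definition OR (n : nat) (PS : {set {set pixel n}}) : nat :=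
  min_nat (fun k => exists c : circuit n, [/\ wf_circuit c, computes_or c PS & csize c = k]).
Definition SUM (n : nat) (PS : {set {set pixel n}}) : nat :=
  min_nat (fun k => exists c : circuit n, [/\ wf_circuit c, computes_sum c PS & csize c = k]).
Definition OR2 (n : nat) (PS : {set {set pixel n}}) : nat :=
  min_nat (fun k => exists c : circuit n,
    [/\ wf_circuit c, fanin2 c, computes_or c PS & size c = k]).
Definition SUM2 (n : nat) (PS : {set {set pixel n}}) : nat :=
  min_nat (fun k => exists c : circuit n,
    [/\ wf_circuit c, fanin2 c, computes_sum c PS & size c = k]).

Inductive complexity := cOR | cSUM | cOR2 | cSUM2.

Definition cost (L : complexity) (n : nat) (PS : {set {set pixel n}}) : nat :=
  match L with
  | cOR => OR PS | cSUM => SUM PS | cOR2 => OR2 PS | cSUM2 => SUM2 PS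
  end.

Local Open Scope ring_scope.

Section Strips.
Variables (R : realType) (n : nat).

Definition px (p : pixel n) : R := (val p.1)%:R.
Definition py (p : pixel n) : R := (val p.2)%:R.

Definition dist_line (a b x0 y0 : R) : R :=
  `|a * x0 + b - y0| / Num.sqrt (1 + a ^+ 2).

Definition in_strip (a b C : R) (p : pixel n) : bool :=
  dist_line a b (px p) (py p) <= C / 2.

(* slope of a line which is mostly horizontal inclined to the right and
   integer at an image of width w = n *)
Definition integer_slope (a : R) : Prop :=
  exists2 e : nat, (e < n)%N & a = e%:R / (n.-1)%:R.

Definition in_strip_set (a b C : R) (T : {set pixel n}) : Prop :=
  forall p, p \in T -> in_strip a b C p.

Definition C_parallel (C : R) (M : {set {set pixel n}}) : Prop :=
  exists2 a, integer_slope a &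
    forall T, T \in M -> exists b : R, in_strip_set a b C T.

Definition strip_pattern_set (C : R) (Q : nat) (PS : {set {set pixel n}}) : Prop :=
  [/\ pattern_set PS,
      (forall T, T \in PS -> exists a b : R, integer_slope a /\ in_strip_set a b C T)
    & (forall M : {set {set pixel n}}, M \subset PS -> C_parallel C M ->
         \bigcap_(T in M) T != set0 -> (#|M| <= Q)%N)].
End Strips.

(* Evaluating a circuit in the semigroup of pixel sets under union assigns to
   every gate its support, and a circuit computing a pattern set over
   ({0,1}, or) or (N, +) has, for each pattern T, a gate with support T.
   For 1 < s <= |T|, tracing back the wires of support >= s shows that T is
   covered by the wires of support < s entering the gates of support >= s
   inside T; hence |T| <= (s - 1) N_T(s), where N_T(s) is the fan-in of these
   gates, and summing over s gives |T| ln |T| <= sum of fanin g * |supp g| over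
   the gates g with supp g inside T.
   Summed over the patterns, a gate of support A is counted once for each
   pattern containing A.  Only O(n / width A) integer slopes admit a strip of
   width C through A, each column of A has O(C) pixels, and at most Q patterns
   through A share a slope; so A lies in O(Q n / |A|) patterns and
   sum_T |T| ln |T| = O(Q n) * size.  On the other hand |L_n| = O(n^2) and
   V(L_n) = Omega(n^3) force sum_T |T| ln |T| = Omega(n^3 log n).  Circuits of
   fan-in 2 have at most twice as many edges as gates. *)

From HB Require Import structures.
From mathcomp Require Import all_boot all_order all_algebra.
From mathcomp Require Import boolp reals exp.
From mathcomp Require Import zify ring lra.
Import Order.TTheory GRing.Theory Num.Theory.
Set Implicit Arguments.
Unset Strict Implicit.
Unset Printing Implicit Defensive.

(** * Evaluation and supports *)

Section GateValues.
Variables (S : Type) (op : S -> S -> S) (idx : S) (n : nat) (x : pixel n -> S).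

Lemma eval_aux_cat gs acc : exists t, eval_aux op idx x gs acc = acc ++ t.
Proof.
elim: gs acc => [|g gs IH] acc /=; first by exists [::]; rewrite cats0.
have [t ->] := IH (rcons acc (foldr op idx (map (wire_val idx x acc) g))).
by exists (foldr op idx (map (wire_val idx x acc) g) :: t); rewrite cat_rcons.
Qed.

Lemma nth_eval_aux gs acc i : i < size gs ->
  nth idx (eval_aux op idx x gs acc) (size acc + i) =
  foldr op idx (map (wire_val idx x (take (size acc + i) (eval_aux op idx x gs acc)))
                    (nth [::] gs i)).
Proof.
elim: gs acc i => [|g gs IH] acc [|i] //= lt_i_gs;
  set v := foldr _ _ _; last by have := IH (rcons acc v) i lt_i_gs; rewrite size_rcons addSnnS.
have [t ->] := eval_aux_cat gs (rcons acc v).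
rewrite addn0 nth_cat size_rcons ltnSn nth_rcons ltnn eqxx.
by rewrite take_cat size_rcons ltnSn -cats1 take_size_cat.
Qed.

Lemma nth_gate_values c i : i < size c -> all (wire_before i) (nth [::] c i) ->
  nth idx (gate_values op idx x c) i =
  foldr op idx (map (wire_val idx x (gate_values op idx x c)) (nth [::] c i)).
Proof.
move=> lt_i_c earlier; rewrite [LHS](nth_eval_aux [::] lt_i_c) /=.
congr foldr; elim: (nth [::] c i) earlier => //= w ws IHws /andP[w_lt ws_lt].
by rewrite IHws //; case: w w_lt => //= k lt_k_i; rewrite nth_take.
Qed.

End GateValues.

Section GateValuesMorphism.
Variables (S1 S2 : Type) (op1 : S1 -> S1 -> S1) (idx1 : S1).
Variables (op2 : S2 -> S2 -> S2) (idx2 : S2) (f : S1 -> S2).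
Variables (n : nat) (x1 : pixel n -> S1) (x2 : pixel n -> S2).
Hypotheses (f_idx : f idx1 = idx2) (f_op : {morph f : a b / op1 a b >-> op2 a b}).
Hypothesis f_x : forall p, f (x1 p) = x2 p.

Lemma map_eval_aux gs acc :
  map f (eval_aux op1 idx1 x1 gs acc) = eval_aux op2 idx2 x2 gs (map f acc).
Proof.
elim: gs acc => [|g gs IH] acc //=; rewrite IH map_rcons; congr (eval_aux _ _ _ _ (rcons _ _)).
elim: g => [|w g IHg] //=; rewrite f_op IHg; congr op2.
case: w => [p|k] //=; case: (ltnP k (size acc)) => k_acc.
  by rewrite (nth_map idx1).
by rewrite !nth_default ?size_map.
Qed.

Lemma nth_gate_values_morph c i :
  f (nth idx1 (gate_values op1 idx1 x1 c) i) = nth idx2 (gate_values op2 idx2 x2 c) i.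
Proof.
rewrite /gate_values -[eval_aux op2 idx2 x2 c [::]]/(eval_aux op2 idx2 x2 c (map f [::])).
rewrite -map_eval_aux; case: (ltnP i (size (eval_aux op1 idx1 x1 c [::]))) => i_lt.
  by rewrite (nth_map idx1).
by rewrite !nth_default ?size_map.
Qed.

End GateValuesMorphism.

Section Supports.
Variable n : nat.
Implicit Types (c : circuit n) (PS : {set {set pixel n}}).

Definition supp c g : {set pixel n} :=
  nth set0 (gate_values (@setU _) set0 (fun p => [set p]) c) g.

Definition wire_supp c (w : wire n) : {set pixel n} :=
  match w with WIn p => [set p] | WGate k => supp c k end.

Lemma mem_supp c g p : wf_circuit c -> g < size c ->
  (p \in supp c g) = has (fun w => p \in wire_supp c w) (nth [::] c g).
Proof.
move=> wf_c lt_g_c; rewrite /supp nth_gate_values //; last by case: (wf_c g lt_g_c).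
by elim: (nth [::] c g) => [|[q|k] ws IH] /=; rewrite ?in_set0 // in_setU IH.
Qed.

Lemma or_gate_values c (x : pixel n -> bool) g :
  nth false (gate_values orb false x c) g = or_sum x (supp c g).
Proof.
symmetry; apply: (nth_gate_values_morph (f := or_sum x)).
- by apply/existsP => -[p]; rewrite in_set0.
- move=> A B; apply/existsP/orP => [[p] | [] /existsP[p /andP[p_in x_p]]].
    by rewrite in_setU andb_orl => /orP[] ?; [left | right]; apply/existsP; exists p.
  + by exists p; rewrite in_setU p_in.
  + by exists p; rewrite in_setU p_in orbT.
- move=> p; apply/existsP/idP => [[q] | x_p]; first by rewrite in_set1 => /andP[/eqP->].
  by exists p; rewrite in_set1 eqxx.
Qed.

Lemma sum_gate_values_gt0 c (x : pixel n -> bool) g :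
  nth false (gate_values orb false x c) g =
  (0 < nth 0 (gate_values addn 0 (fun p => nat_of_bool (x p)) c) g)%N.
Proof.
symmetry; apply: (nth_gate_values_morph (f := fun k => 0 < k)%N) => //.
- by move=> a b; rewrite addn_gt0.
- by move=> p; case: (x p).
Qed.

Definition computes_supports c PS :=
  forall T, T \in PS -> exists2 g, g < size c & supp c g = T.

Lemma computes_or_supports c PS : computes_or c PS -> computes_supports c PS.
Proof.
move=> c_or T T_PS; have [g lt_g_c [_ val_g]] := c_or T T_PS; exists g => //.
apply/setP => p; have := val_g (pred1 p); rewrite or_gate_values.
have or_sum1 A : or_sum (pred1 p) A = (p \in A).
  by apply/existsP/idP => [[q /andP[q_A /eqP <-]] // | p_A]; exists p; rewrite p_A /=.
by rewrite !or_sum1.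
Qed.

Lemma computes_sum_supports c PS : computes_sum c PS -> computes_supports c PS.
Proof.
move=> c_sum; apply: computes_or_supports => T T_PS.
have [g lt_g_c [out_g val_g]] := c_sum T T_PS; exists g => //; split=> // x.
rewrite sum_gate_values_gt0 val_g /nat_sum lt0n sum_nat_eq0 negb_forall.
by apply: eq_existsb => p; rewrite negb_imply; case: (x p); rewrite ?andbT ?andbF.
Qed.

End Supports.

Definition wire_enc n (w : wire n) : pixel n + nat :=
  match w with WIn p => inl p | WGate k => inr k end.
Definition wire_dec n (u : pixel n + nat) : wire n :=
  match u with inl p => WIn p | inr k => WGate n k end.
Lemma wire_encK n : cancel (@wire_enc n) (@wire_dec n). Proof. by case. Qed.
HB.instance Definition _ (n : nat) := Equality.copy (wire n) (can_type (@wire_encK n)).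

(** * A circuit computing every pattern set *)

Section ChainCircuit.
Variables (n : nat) (PS : {set {set pixel n}}).
Hypothesis PS_patterns : pattern_set PS.

Definition npix := #|{: pixel n}|.
Definition pats := enum PS.
Definition pat_seq i := enum (nth set0 pats i).

(* Pattern i is summed up by the chain of gates i * npix + j, j < npix; gate j
   adds the j-th pixel of the pattern, or copies its predecessor once the
   pattern is exhausted. *)
Definition chain_gate (k : nat) : seq (wire n) :=
  let s := pat_seq (k %/ npix) in
  let j := k %% npix in
  if s is p0 :: _ then
    if j == 0 then [:: WIn p0]
    else if j < size s then [:: WGate n k.-1; WIn (nth p0 s j)]
    else [:: WGate n k.-1]
  else [::].

Definition chain_circuit : circuit n := mkseq chain_gate (size pats * npix).

Lemma size_chain_circuit : size chain_circuit = size pats * npix.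
Proof. exact: size_mkseq. Qed.

Lemma npix_gt0 : 0 < npix.
Proof.
case: PS_patterns => /set0Pn[T T_PS] nonempty; have /set0Pn[p _] := nonempty T T_PS.
by apply/card_gt0P; exists p.
Qed.

Lemma size_pat_seq_gt0 i : i < size pats -> 0 < size (pat_seq i).
Proof.
move=> lt_i; rewrite /pat_seq -cardE card_gt0; case: PS_patterns => _; apply.
by rewrite -mem_enum mem_nth.
Qed.

Lemma chain_gate_wf k : k < size pats * npix ->
  [/\ 0 < size (chain_gate k), all (wire_before k) (chain_gate k) & size (chain_gate k) <= 2].
Proof.
move=> lt_k; have lt_i : k %/ npix < size pats by rewrite ltn_divLR ?npix_gt0.
move: (size_pat_seq_gt0 lt_i); rewrite /chain_gate.
case: (pat_seq _) => [//|p0 s] _; case: eqP => [//|j_n0].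
have k_gt0 : 0 < k by case: k j_n0 {lt_k lt_i} => //; rewrite mod0n.
by case: ifP => _; split; rewrite /= ?andbT ?ltn_predL.
Qed.

Lemma chain_circuit_wf : wf_circuit chain_circuit.
Proof.
move=> k; rewrite size_chain_circuit => lt_k; rewrite nth_mkseq //.
by case: (chain_gate_wf lt_k).
Qed.

Lemma chain_circuit_fanin2 : fanin2 chain_circuit.
Proof.
apply/allP => g /mapP[k]; rewrite mem_iota => /andP[_ lt_k] ->.
by case: (chain_gate_wf lt_k).
Qed.

Definition chain_out i := i * npix + npix.-1.

Lemma chain_out_lt i : i < size pats -> chain_out i < size chain_circuit.
Proof.
move=> lt_i; rewrite size_chain_circuit /chain_out.
apply: leq_trans (_ : i.+1 * npix <= _); last by rewrite leq_mul2r lt_i orbT.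
by rewrite mulSn; have := npix_gt0; lia.
Qed.

(* Gate k refers only to gate k.-1, and gate chain_out i + 1 starts a new chain. *)
Lemma chain_out_fanout0 i : fanout0 chain_circuit (chain_out i).
Proof.
apply/hasPn => g /mapP[k _ ->]; rewrite /chain_gate.
case: (pat_seq _) => [//|p0 s]; case: eqP => [//|j_n0].
have k_ne : k.-1 != chain_out i.
  apply: contra_notN j_n0; case: k => [|k]; rewrite ?mod0n //= => /eqP k_out.
  have -> : k.+1 = i.+1 * npix by rewrite mulSn k_out /chain_out; have := npix_gt0; lia.
  by rewrite modnMl.
by case: ifP => _ /=; rewrite ?orbF (negPf k_ne).
Qed.

Section ChainValues.
Variables (S : Type) (idx : S) (op : Monoid.com_law idx) (x : pixel n -> S).

Let vals := gate_values op idx x chain_circuit.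

Lemma nth_chain_values i j : i < size pats -> j < npix ->
  nth idx vals (i * npix + j) = \big[op/idx]_(p <- take j.+1 (pat_seq i)) x p.
Proof.
move=> lt_i; have npix_gt0 := npix_gt0.
have lt_k j' : j' < npix -> i * npix + j' < size pats * npix.
  move=> lt_j'; apply: leq_trans (_ : i.+1 * npix <= _); last by rewrite leq_mul2r lt_i orbT.
  by rewrite mulSn addnC ltn_add2r.
have gateE j' : j' < npix -> nth idx vals (i * npix + j') =
    foldr op idx (map (wire_val idx x vals) (chain_gate (i * npix + j'))).
  move=> lt_j'; have [_ before _] := chain_gate_wf (lt_k j' lt_j').
  by rewrite /vals nth_gate_values ?size_chain_circuit ?nth_mkseq ?lt_k.
elim: j => [|j IH] lt_j; rewrite gateE // /chain_gate divnMDl // divn_small // addn0.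
  rewrite modnMDl mod0n; case: (pat_seq i) (size_pat_seq_gt0 lt_i) => [//|p0 s] _ /=.
  by rewrite Monoid.mulm1 take0 big_seq1.
rewrite modnMDl modn_small //= addnS; have {}IH := IH (ltnW lt_j).
case E: (pat_seq i) (size_pat_seq_gt0 lt_i) => [//|p0 s] _; rewrite -E.
case: ifP => lt_j_s /=; rewrite Monoid.mulm1 IH.
  by rewrite (take_nth p0 lt_j_s) big_rcons.
have le_s : size (pat_seq i) <= j.+1 by rewrite leqNgt lt_j_s.
by rewrite !take_oversize // (leq_trans le_s).
Qed.

Lemma nth_chain_out i : i < size pats ->
  nth idx vals (chain_out i) = \big[op/idx]_(p in nth set0 pats i) x p.
Proof.
move=> lt_i; rewrite nth_chain_values ?prednK ?npix_gt0 // ?leq_pred //.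
rewrite take_oversize; first exact: big_enum.
by rewrite /pat_seq -cardE max_card.
Qed.

End ChainValues.

Lemma chain_circuit_computes :
  computes_or chain_circuit PS /\ computes_sum chain_circuit PS.
Proof.
split=> T T_PS; have lt_i : index T pats < size pats by rewrite index_mem mem_enum.
all: exists (chain_out (index T pats)); first exact: chain_out_lt.
all: split=> [|x]; first exact: chain_out_fanout0.
- by rewrite nth_chain_out // nth_index ?mem_enum // big_orE.
- by rewrite nth_chain_out // nth_index ?mem_enum.
Qed.

End ChainCircuit.

Lemma csize_le_fanin2 n (c : circuit n) : fanin2 c -> csize c <= 2 * size c.
Proof.
rewrite /csize; elim: c => //= g c IH /andP[g_le2 c_fanin2].
by rewrite mulnS leq_add ?IH.
Qed.

(** * The fan-in counting bound *)

Lemma card_bigcup_seq_le (T : finType) (I : Type) (r : seq I) (P : pred I) (F : I -> {set T}) :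
  #|\big[@setU T/set0]_(i <- r | P i) F i| <= \sum_(i <- r | P i) #|F i|.
Proof.
elim/big_ind2: _ => [|a A b B le_A le_B|i _] //; first by rewrite cards0.
by rewrite (leq_trans (leq_card_setU A B)) ?leq_add.
Qed.

Lemma mem_bigcup_seq (T : finType) (I : Type) (r : seq I) (P : pred I) (F : I -> {set T}) x :
  (x \in \big[@setU T/set0]_(i <- r | P i) F i) = has (fun i => P i && (x \in F i)) r.
Proof.
elim: r => [|i r IH]; first by rewrite big_nil in_set0.
by rewrite big_cons /=; case: (P i); rewrite //= in_setU IH.
Qed.

Lemma sum_nat_leq_indicator (b k : nat) : \sum_(1 <= s < b) (s <= k) = minn b.-1 k.
Proof.
elim: b => [|[|b] IH]; [by rewrite big_geq ?min0n.. |].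
by rewrite big_nat_recr //= IH; case: leqP; lia.
Qed.

Section FaninCount.
Variables (n : nat) (c : circuit n).
Hypothesis wf_c : wf_circuit c.
Implicit Type T : {set pixel n}.

Definition fanin g := size (nth [::] c g).

Definition large_gate T s (g : 'I_(size c)) :=
  (supp c g \subset T) && (s <= #|supp c g|).

Definition large_fanin T s := \sum_(g < size c | large_gate T s g) fanin g.

Definition small_cover T s :=
  \bigcup_(g | large_gate T s g)
     \big[@setU _/set0]_(w <- nth [::] c g | #|wire_supp c w| < s) wire_supp c w.

Lemma wire_supp_sub g w : g < size c -> w \in nth [::] c g -> wire_supp c w \subset supp c g.
Proof.
by move=> lt_g_c w_g; apply/subsetP => p p_w; rewrite mem_supp //; apply/hasP; exists w.
Qed.

(* A wire of support at least s entering a large gate is not an input (inputs have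
   support 1 < s), so it is itself a large gate, with a smaller index. *)
Lemma supp_sub_small_cover T s g : 1 < s -> g < size c ->
  supp c g \subset T -> s <= #|supp c g| -> supp c g \subset small_cover T s.
Proof.
move=> lt_1_s; elim/ltn_ind: g => g IH lt_g_c g_T g_large.
apply/subsetP => p; rewrite mem_supp // => /hasP[w w_g p_w].
have w_sub := wire_supp_sub lt_g_c w_g.
case: (ltnP #|wire_supp c w| s) => [w_small | w_large].
  apply/bigcupP; exists (Ordinal lt_g_c); first by rewrite /large_gate g_T g_large.
  by rewrite mem_bigcup_seq; apply/hasP; exists w; rewrite ?w_small.
have [_ /allP/(_ w w_g)] := wf_c lt_g_c.
case: w w_g p_w w_sub w_large => [q|k] _ /= p_k k_sub k_large lt_k_g.
  by move: (leq_trans lt_1_s k_large); rewrite cards1.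
apply: subsetP p p_k; apply: IH => //; first exact: ltn_trans lt_g_c.
exact: subset_trans g_T.
Qed.

Lemma card_le_large_fanin T s : (exists2 g, g < size c & supp c g = T) ->
  1 < s -> s <= #|T| -> #|T| <= s.-1 * large_fanin T s.
Proof.
move=> [g lt_g_c <-] lt_1_s s_le.
have /subset_leq_card := supp_sub_small_cover lt_1_s lt_g_c (subxx _) s_le.
move/leq_trans; apply.
rewrite /small_cover; apply: leq_trans (card_bigcup_seq_le _ _ _) _.
rewrite /large_fanin big_distrr /=; apply: leq_sum => h _.
apply: leq_trans (card_bigcup_seq_le _ _ _) _.
rewrite mulnC /fanin -[size (nth _ _ _)]sum1_size big_distrl big_mkcond leq_sum //= => w _.
by case: ifP => // w_small; rewrite mul1n -ltnS prednK // ltnW.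
Qed.

Definition weight T := \sum_(g < size c | supp c g \subset T) fanin g * #|supp c g|.

Lemma sum_large_fanin_le_weight T : \sum_(1 <= s < #|T|.+1) large_fanin T s <= weight T.
Proof.
rewrite /large_fanin; under eq_bigr => s _ do rewrite big_mkcondr /=.
rewrite exchange_big /weight leq_sum // => g _.
under eq_bigr => s _ do rewrite -mulnbl.
by rewrite -big_distrl /= sum_nat_leq_indicator mulnC leq_mul2l geq_minr orbT.
Qed.

End FaninCount.

Lemma csizeE n (c : circuit n) : csize c = \sum_(g < size c) fanin c g.
Proof. by rewrite /csize /fanin sumnE big_map (big_nth [::]) big_mkord. Qed.

Lemma sum_weight n (c : circuit n) (PS : {set {set pixel n}}) :
  \sum_(T in PS) weight c T =
  \sum_(g < size c) fanin c g * #|supp c g| * #|[set T in PS | supp c g \subset T]|.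
Proof.
rewrite /weight; under eq_bigr => T _ do rewrite big_mkcond /=.
rewrite exchange_big /=; apply: eq_bigr => g _.
rewrite -big_mkcondr sum_nat_const mulnC; congr (_ * _).
by apply: eq_card => T; rewrite inE.
Qed.

Local Open Scope ring_scope.

Lemma ln_le_harmonic (R : realType) (t : nat) : (0 < t)%N ->
  ln (t%:R : R) <= \sum_(2 <= s < t.+1) (s.-1)%:R^-1.
Proof.
elim: t => [//|[|t] IH] _; first by rewrite ln1 big_geq.
have t1_gt0 : (0 : R) < t.+1%:R by rewrite ltr0n.
have -> : (t.+2%:R : R) = t.+1%:R * (1 + t.+1%:R^-1).
  by rewrite mulrDr mulr1 mulfV ?gt_eqF // -natr1.
rewrite big_nat_recr //= lnM ?posrE ?addr_gt0 ?invr_gt0 // lerD ?IH //.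
by rewrite le_ln1Dx // (lt_le_trans (ltrN10 R)) // invr_ge0 ler0n.
Qed.

Lemma xlnx_le_weight (R : realType) n (c : circuit n) (T : {set pixel n}) :
  wf_circuit c -> (exists2 g, (g < size c)%N & supp c g = T) ->
  #|T|%:R * ln (#|T|%:R : R) <= (weight c T)%:R.
Proof.
move=> wf_c T_gate; have [-> | t_gt0] := posnP #|T|; first by rewrite mul0r ler0n.
apply: le_trans (_ : (\sum_(1 <= s < #|T|.+1) large_fanin c T s)%:R <= _);
  last by rewrite ler_nat sum_large_fanin_le_weight.
rewrite big_ltn ?ltnS // natrD natr_sum.
apply: le_trans (_ : \sum_(2 <= s < #|T|.+1) (large_fanin c T s)%:R <= _); last by rewrite lerDr.
apply: le_trans (ler_wpM2l (ler0n _ _) (ln_le_harmonic R t_gt0)) _.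
rewrite mulr_sumr ler_sum_nat // => s /andP[lt_1_s s_le].
have s1_gt0 : (0 : R) < s.-1%:R by rewrite ltr0n -ltnS prednK // ltnW.
by rewrite ler_pdivrMr // mulrC -natrM ler_nat card_le_large_fanin.
Qed.

(** * Strips *)

Lemma card_le_spread (R : realDomainType) (T : finType) (f : T -> nat) (F : {set T}) :
  {in F &, injective f} -> F != set0 ->
  exists2 p, p \in F & exists2 q, q \in F & (#|F|%:R : R) <= (f q)%:R - (f p)%:R + 1.
Proof.
move=> f_inj /set0Pn[x0 x0_F].
case: (arg_minnP f x0_F) => p p_F p_min; case: (arg_maxnP f x0_F) => q q_F q_max.
exists p => //; exists q => //.
have le_pq : (f p <= f q)%N by rewrite (leq_trans (p_min _ q_F)).
rewrite -natrB // natr1 ler_nat cardE -(size_map f) -(size_iota (f p) (f q - f p).+1).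
apply: uniq_leq_size => [|y /mapP[x]].
  by rewrite map_inj_in_uniq ?enum_uniq // => x y; rewrite !mem_enum; apply: f_inj.
rewrite mem_enum mem_iota addnS subnKC // => x_F ->.
by rewrite p_min //= ltnS; apply: q_max.
Qed.

Section StripGeometry.
Variables (R : realType) (n : nat) (C : R).
Hypothesis C_gt0 : 0 < C.
Implicit Types (A : {set pixel n}) (a b : R).

Definition slope_of (e : nat) : R := e%:R / (n.-1)%:R.

Lemma slope_ofK (e : nat) : (e < n)%N -> e%:R = slope_of e * (n.-1)%:R.
Proof.
move=> lt_e_n; have [n1_0 | n1_gt0] := posnP n.-1.
  by rewrite n1_0 mulr0; move: lt_e_n n1_0; case: e => //; lia.
by rewrite /slope_of divfK // pnatr_eq0 -lt0n.
Qed.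

Lemma slope_of_01 (e : nat) : (e < n)%N -> 0 <= slope_of e <= 1.
Proof.
move=> lt_e_n; rewrite /slope_of divr_ge0 //=; have [-> | n1_gt0] := posnP n.-1.
  by rewrite invr0 mulr0.
by rewrite ler_pdivrMr ?ltr0n // mul1r ler_nat -ltnS prednK // (leq_ltn_trans _ lt_e_n).
Qed.

(* A slope in [0, 1] makes the vertical distance at most twice the Euclidean one. *)
Lemma in_strip_residual a b (p : pixel n) : 0 <= a <= 1 -> in_strip a b C p ->
  `|a * px R p + b - py R p| <= C.
Proof.
move=> /andP[a_ge0 a_le1]; rewrite /in_strip /dist_line.
have sqrt_gt0 : 0 < Num.sqrt (1 + a ^+ 2) by rewrite sqrtr_gt0 ltr_pwDl ?sqr_ge0.
have sqrt_le2 : Num.sqrt (1 + a ^+ 2) <= 2.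
  rewrite -[X in _ <= X](@ger0_norm _ 2) // -sqrtr_sqr ler_sqrt ?sqr_ge0 //.
  suff : a ^+ 2 <= 1 by lra.
  by rewrite -(expr1n _ 2) ler_pXn2r // nnegrE.
rewrite ler_pdivrMr // => /le_trans; apply.
have C2_ge0 : 0 <= C / 2 by rewrite divr_ge0 // ltW.
by apply: le_trans (ler_wpM2l C2_ge0 sqrt_le2) _; rewrite divfK ?pnatr_eq0.
Qed.

Lemma card_column_le A a b (x : 'I_n) : 0 <= a <= 1 -> in_strip_set a b C A ->
  #|[set p in A | p.1 == x]|%:R <= 2 * C + 1.
Proof.
move=> a01 A_strip; set col := [set p in A | p.1 == x].
have [-> | col_n0] := eqVneq col set0; first by rewrite cards0; have := C_gt0; lra.
have col_inj : {in col &, injective (fun p : pixel n => val p.2)}.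
  move=> [x1 y1] [x2 y2]; rewrite !inE /= => /andP[_ /eqP->] /andP[_ /eqP->] /val_inj.
  by move->.
have [p p_col [q q_col]] := card_le_spread R col_inj col_n0.
move: p_col q_col; rewrite !inE => /andP[/A_strip p_strip /eqP p1] /andP[/A_strip q_strip /eqP q1].
have := in_strip_residual a01 p_strip; have := in_strip_residual a01 q_strip.
rewrite /px /py p1 q1 => /ler_normlP[? ?] /ler_normlP[? ?]; lra.
Qed.

Definition columns A : {set 'I_n} := [set p.1 | p in A].

Lemma card_le_columns A a b : 0 <= a <= 1 -> in_strip_set a b C A ->
  #|A|%:R <= #|columns A|%:R * (2 * C + 1).
Proof.
move=> a01 A_strip; rewrite -sum1_card.
rewrite (partition_big (fun p : pixel n => p.1) (mem (columns A))) => [|p p_A]; last first.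
  exact: imset_f.
rewrite natr_sum mulr_natl -sumr_const ler_sum // => x _.
by rewrite sum1dep_card (le_trans _ (card_column_le x a01 A_strip)).
Qed.

Lemma card_le_width A a b : 0 <= a <= 1 -> in_strip_set a b C A -> A != set0 ->
  exists2 p, p \in A & exists2 q, q \in A &
    0 <= px R q - px R p /\ #|A|%:R <= (px R q - px R p + 1) * (2 * C + 1).
Proof.
move=> a01 A_strip A_n0; have A_cols := card_le_columns a01 A_strip.
have cols_n0 : columns A != set0 by rewrite imset_eq0.
have [_ /imsetP[p p_A ->] [_ /imsetP[q q_A ->] cols_spread]] :=
  card_le_spread R (in2W val_inj) cols_n0.
have cols_le : #|columns A|%:R <= px R q - px R p + 1 := cols_spread.
exists p => //; exists q => //; split.
  have : (1 : R) <= #|columns A|%:R by rewrite ler1n card_gt0.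
  lra.
by rewrite (le_trans A_cols) // ler_wpM2r // addr_ge0 // mulr_ge0 // ltW.
Qed.

Definition slopes A : {set 'I_n} :=
  [set e : 'I_n | `[< exists b, in_strip_set (slope_of e) b C A >]].

Lemma slopes_strip A (e : 'I_n) : e \in slopes A ->
  exists b, forall p, p \in A -> `|slope_of e * px R p + b - py R p| <= C.
Proof.
rewrite inE => /asboolP[b A_strip]; exists b => p p_A.
by rewrite in_strip_residual ?slope_of_01 ?A_strip.
Qed.

(* Two strips containing A diverge by (e - e') / (n - 1) per column. *)
Lemma slopes_spread A (e e' : 'I_n) (p q : pixel n) : e \in slopes A -> e' \in slopes A ->
  p \in A -> q \in A -> ((e : nat)%:R - (e' : nat)%:R) * (px R q - px R p) <= 4 * C * (n.-1)%:R.
Proof.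
move=> /slopes_strip[b strip_e] /slopes_strip[b' strip_e'] p_A q_A.
rewrite (slope_ofK (ltn_ord e)) (slope_ofK (ltn_ord e')) -mulrBl mulrAC.
rewrite ler_wpM2r ?ler0n //.
move: (strip_e p p_A) (strip_e q q_A) (strip_e' p p_A) (strip_e' q q_A).
set a := slope_of e; set a' := slope_of e'.
move=> /ler_normlP[? ?] /ler_normlP[? ?] /ler_normlP[? ?] /ler_normlP[? ?].
have -> : (a - a') * (px R q - px R p) =
  (a * px R q + b - py R q) - (a * px R p + b - py R p)
  - (a' * px R q + b' - py R q) + (a' * px R p + b' - py R p) by ring.
lra.
Qed.

Lemma card_slopes_mul_card_le A :
  #|slopes A|%:R * #|A|%:R <= 2 * (2 * C + 1) ^+ 2 * n%:R.
Proof.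
have C_ge0 : 0 <= C by apply: ltW.
have K_ge0 : 0 <= 2 * (2 * C + 1) ^+ 2 * n%:R by rewrite !mulr_ge0 ?exprn_ge0 ?addr_ge0 ?mulr_ge0.
have [-> | S_n0] := eqVneq (slopes A) set0; first by rewrite cards0 mul0r.
have [-> | A_n0] := eqVneq A set0; first by rewrite cards0 mulr0.
have [e0] := set0Pn _ S_n0; rewrite inE => /asboolP[b0 A_strip].
have [pu pu_A [pv pv_A []]] := card_le_width (slope_of_01 (ltn_ord e0)) A_strip A_n0.
have [e1 e1_S [e2 e2_S S_spread]] := card_le_spread R (in2W val_inj) S_n0.
have S_le : #|slopes A|%:R <= (val e2)%:R - (val e1)%:R + 1 := S_spread.
have spread := slopes_spread e2_S e1_S pu_A pv_A.
have w1_le : px R pv - px R pu + 1 <= n%:R.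
  have : px R pv + 1 <= n%:R by rewrite /px natr1 ler_nat ltn_ord.
  have : 0 <= px R pu by rewrite /px ler0n.
  lra.
move: (px R pv - px R pu) spread w1_le => w spread w1_le w_ge0 A_le.
have S_le_n : #|slopes A|%:R <= n%:R :> R.
  by rewrite ler_nat (leq_trans (max_card _)) ?card_ord.
have n1_le : (n.-1)%:R <= n%:R :> R by rewrite ler_nat leq_pred.
have Sw_le : #|slopes A|%:R * (w + 1) <= (4 * C + 2) * n%:R.
  have : #|slopes A|%:R * w <= ((val e2)%:R - (val e1)%:R + 1) * w by rewrite ler_wpM2r.
  have : 4 * C * (n.-1)%:R <= 4 * C * n%:R by rewrite ler_wpM2l ?mulr_ge0.
  nra.
apply: le_trans (_ : #|slopes A|%:R * ((w + 1) * (2 * C + 1)) <= _).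
  by rewrite ler_wpM2l.
by rewrite mulrA (le_trans (ler_wpM2r _ Sw_le)) ?addr_ge0 ?mulr_ge0 //; nra.
Qed.

End StripGeometry.

Section Density.
Variables (R : realType) (n : nat) (C : R) (Q : nat) (PS : {set {set pixel n}}).
Hypothesis PS_strip : strip_pattern_set C Q PS.

(* Patterns through A sharing a slope are C-parallel with a common point, so
   density bounds them by Q; and every slope of such a pattern is a slope of A. *)
Lemma card_patterns_through A : A != set0 ->
  (#|[set T in PS | A \subset T]| <= #|slopes C A| * Q)%N.
Proof.
move=> A_n0; case: PS_strip => _ PS_slopes PS_density.
pose through e := [set T in PS | (A \subset T) &&
  `[< exists b, in_strip_set (slope_of R n e) b C T >]].
have cover : [set T in PS | A \subset T] \subset \bigcup_(e in slopes C A) through e.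
  apply/subsetP => T; rewrite inE => /andP[T_PS A_T].
  have [a [b [[e lt_e_n ->] T_strip]]] := PS_slopes T T_PS.
  apply/bigcupP; exists (Ordinal lt_e_n).
    by rewrite inE; apply/asboolP; exists b => p /(subsetP A_T); apply: T_strip.
  by rewrite inE T_PS A_T; apply/asboolP; exists b.
apply: leq_trans (subset_leq_card cover) _.
apply: leq_trans (card_bigcup_seq_le _ _ _) _.
rewrite -sum_nat_const leq_sum // => e _; apply: PS_density.
- by apply/subsetP => T; rewrite inE => /andP[].
- exists (slope_of R n e); first by exists e.
  by move=> T; rewrite inE => /and3P[_ _ /asboolP].
- have [p p_A] := set0Pn _ A_n0; apply/set0Pn; exists p.
  by apply/bigcapP => T; rewrite inE => /and3P[_ /subsetP A_T _]; apply: A_T.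
Qed.

End Density.

(** * The lower bound *)

Lemma sum_xlnx_le_csize (R : realType) n (C : R) Q (PS : {set {set pixel n}}) (c : circuit n) :
  0 < C -> strip_pattern_set C Q PS -> wf_circuit c -> computes_supports c PS ->
  \sum_(T in PS) #|T|%:R * ln (#|T|%:R : R) <=
  (csize c)%:R * (Q%:R * (2 * (2 * C + 1) ^+ 2 * n%:R)).
Proof.
move=> C_gt0 PS_strip wf_c c_PS.
apply: le_trans (_ : \sum_(T in PS) (weight c T)%:R <= _).
  by apply: ler_sum => T /c_PS; apply: xlnx_le_weight.
rewrite -natr_sum sum_weight natr_sum csizeE natr_sum mulr_suml ler_sum // => g _.
rewrite -mulnA natrM ler_wpM2l //.
have [-> | A_n0] := eqVneq (supp c g) set0.
  rewrite cards0 mul0n; apply: mulr_ge0 => //.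
  have : 0 <= C by apply: ltW.
  have : 0 <= n%:R :> R by [].
  nra.
apply: le_trans (_ : (#|supp c g| * (#|slopes C (supp c g)| * Q))%:R <= _).
  by rewrite ler_nat leq_mul2l card_patterns_through ?orbT.
rewrite natrM natrM mulrCA mulrA [X in _ <= X]mulrC ler_wpM2r //.
exact: card_slopes_mul_card_le.
Qed.

Section Asymptotics.
Variable R : realType.

Lemma nat_gt0_of_mul_ge1 (a : R) n : 1 <= a * n%:R -> (0 < n)%N.
Proof. by rewrite lt0n; apply: contraTneq => ->; rewrite mulr0 ler10. Qed.

Lemma mul_ge1_archi_bound (a : R) n : 0 < a -> (Num.Def.archi_bound a^-1 <= n)%N ->
  1 <= a * n%:R.
Proof.
move=> a_gt0 n_bound; have inv_le : a^-1 <= n%:R.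
  by rewrite ltW // (lt_le_trans (archi_boundP _)) ?ler_nat // invr_ge0 ltW.
by rewrite -[X in X <= _](mulfV (lt0r_neq0 a_gt0)) ler_wpM2l // ltW.
Qed.

Lemma xlnx_ge_shift (t : nat) (L : R) : 1 <= L -> (t%:R - L) * ln L <= t%:R * ln t%:R.
Proof.
move=> L_ge1; have lnL_ge0 := ln_ge0 L_ge1.
have [t_le | t_gt] := leP L t%:R; last first.
  have : 0 <= t%:R * ln (t%:R : R).
    by case: t t_gt => [|t] _; rewrite ?mul0r // mulr_ge0 ?ln_ge0 ?ler1n.
  nra.
have : ln L <= ln (t%:R : R) by rewrite ler_ln ?posrE //; lra.
have : 0 <= t%:R :> R by [].
nra.
Qed.

Lemma sum_xlnx_ge n (PS : {set {set pixel n}}) (L : R) : 1 <= L ->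
  ((volume PS)%:R - #|PS|%:R * L) * ln L <= \sum_(T in PS) #|T|%:R * ln (#|T|%:R : R).
Proof.
move=> L_ge1; rewrite /volume natr_sum mulr_natl -sumr_const -sumrB mulr_suml.
by apply: ler_sum => T _; apply: xlnx_ge_shift.
Qed.

(* Take L = alpha n in sum_xlnx_ge: the patterns hold at least c3 n^3 pixels, at most
   half of which fall in the #|PS| L <= c3/2 n^3 discounted ones, and alpha^2 n >= 1
   gives ln (alpha n) >= ln n / 2. *)
Lemma sum_xlnx_ge_cube (c2 c3 : R) n (PS : {set {set pixel n}}) :
  0 < c2 -> 0 < c3 -> 1 <= (c3 / (2 * c2)) ^+ 2 * n%:R ->
  #|PS|%:R <= c2 * n%:R ^+ 2 -> c3 * n%:R ^+ 3 <= (volume PS)%:R ->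
  c3 / 4 * n%:R ^+ 3 * ln n%:R <= \sum_(T in PS) #|T|%:R * ln (#|T|%:R : R).
Proof.
set alpha := c3 / (2 * c2) => c2_gt0 c3_gt0 n_large card_le vol_ge.
have alpha_gt0 : 0 < alpha by rewrite divr_gt0 ?mulr_gt0.
have x_ge1 : 1 <= n%:R :> R by rewrite ler1n (nat_gt0_of_mul_ge1 n_large).
set x := (n%:R : R) in n_large card_le vol_ge x_ge1 *.
have sq_ge1 : 1 <= (alpha * x) ^+ 2.
  have : alpha ^+ 2 * x <= alpha ^+ 2 * x * x by rewrite ler_peMr // mulr_ge0 ?sqr_ge0.
  have -> : (alpha * x) ^+ 2 = alpha ^+ 2 * x * x by ring.
  lra.
have ax_ge1 : 1 <= alpha * x.
  have : 0 < alpha * x by rewrite mulr_gt0 //; lra.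
  nra.
have ln_half : ln x <= 2 * ln (alpha * x).
  have pos (y : R) : 1 <= y -> y \is Num.pos by move=> ?; rewrite posrE; lra.
  have := lnM (pos _ ax_ge1) (pos _ ax_ge1); have := lnM (pos _ n_large) (pos _ x_ge1).
  have -> : alpha * x * (alpha * x) = alpha ^+ 2 * x * x by ring.
  have := ln_ge0 n_large; lra.
have lnax_ge0 := ln_ge0 ax_ge1.
apply: le_trans (sum_xlnx_ge PS ax_ge1).
have card_L : #|PS|%:R * (alpha * x) <= c3 / 2 * x ^+ 3.
  have -> : c3 / 2 * x ^+ 3 = c2 * x ^+ 2 * (alpha * x) by rewrite /alpha; field; lra.
  by rewrite ler_wpM2r //; lra.
have x3_ge0 : 0 <= x ^+ 3 by rewrite exprn_ge0 //; lra.
apply: le_trans (_ : c3 / 2 * x ^+ 3 * ln (alpha * x) <= _); last first.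
  by rewrite ler_wpM2r //; lra.
have -> : c3 / 4 * x ^+ 3 * ln x = c3 / 2 * x ^+ 3 * (ln x / 2) by field.
rewrite ler_wpM2l ?mulr_ge0 //; lra.
Qed.

End Asymptotics.

Lemma csize_ge_sq_ln (R : realType) (C c2 c3 : R) (Q n : nat) (PS : {set {set pixel n}})
    (c : circuit n) :
  0 < C -> 0 < c2 -> 0 < c3 -> 1 <= (c3 / (2 * c2)) ^+ 2 * n%:R ->
  strip_pattern_set C Q PS ->
  #|PS|%:R <= c2 * n%:R ^+ 2 -> c3 * n%:R ^+ 3 <= (volume PS)%:R ->
  wf_circuit c -> computes_supports c PS ->
  c3 / (4 * (Q.+1%:R * (2 * (2 * C + 1) ^+ 2))) * n%:R ^+ 2 * ln n%:R <= (csize c)%:R.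
Proof.
move=> C_gt0 c2_gt0 c3_gt0 n_large PS_strip card_le vol_ge wf_c c_PS.
set K := 2 * (2 * C + 1) ^+ 2.
have K_gt0 : 0 < K by rewrite mulr_gt0 ?exprn_gt0 //; lra.
have n_gt0 : 0 < n%:R :> R by rewrite ltr0n (nat_gt0_of_mul_ge1 n_large).
have := sum_xlnx_le_csize C_gt0 PS_strip wf_c c_PS.
have := sum_xlnx_ge_cube c2_gt0 c3_gt0 n_large card_le vol_ge.
move=> /le_trans/[apply]; rewrite -/K => lb.
have -> : c3 / (4 * (Q.+1%:R * K)) * n%:R ^+ 2 * ln n%:R =
    (c3 / 4 * n%:R ^+ 3 * ln n%:R) / (Q.+1%:R * K * n%:R).
  by field; rewrite !gt_eqF // ltr_pwDl.
rewrite ler_pdivrMr; last by rewrite mulr_gt0 // mulr_gt0.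
apply: (le_trans lb).
by rewrite ler_wpM2l // mulrA ler_wpM2r ?ler_wpM2r ?ler_nat // ltW.
Qed.

Lemma le_min_nat (R : realType) (P : nat -> Prop) (B : R) :
  (exists k, P k) -> (forall k, P k -> B <= k%:R) -> B <= (min_nat P)%:R.
Proof.
move=> [k Pk] lb; rewrite /min_nat; case: pselect => [h | []]; last by exists k.
by case: ex_minnP => m /asboolP Pm _; apply: lb.
Qed.

(* min_nat is 0 when no circuit exists, hence the explicit chain circuit. *)
Lemma cost_ge (R : realType) (L : complexity) n (PS : {set {set pixel n}}) (B : R) :
  pattern_set PS ->
  (forall c, wf_circuit c -> computes_supports c PS -> 2 * B <= (csize c)%:R) ->
  B <= (cost L PS)%:R.
Proof.
move=> PS_patterns lb; have [or_ch sum_ch] := chain_circuit_computes PS_patterns.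
have wf_ch := chain_circuit_wf PS_patterns; have fanin2_ch := chain_circuit_fanin2 PS_patterns.
have size_lb c : wf_circuit c -> fanin2 c -> computes_supports c PS -> B <= (size c)%:R.
  move=> wf_c /csize_le_fanin2; rewrite -(ler_nat R) natrM => csize_le /(lb c wf_c).
  lra.
case: L; apply: le_min_nat.
- by exists (csize (chain_circuit PS)), (chain_circuit PS).
- move=> k [c [wf_c /computes_or_supports/(lb c wf_c) ? <-]].
  by have := ler0n R (csize c); lra.
- by exists (csize (chain_circuit PS)), (chain_circuit PS).
- move=> k [c [wf_c /computes_sum_supports/(lb c wf_c) ? <-]].
  by have := ler0n R (csize c); lra.
- by exists (size (chain_circuit PS)), (chain_circuit PS).
- by move=> k [c [wf_c f2 /computes_or_supports ? <-]]; apply: size_lb.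
- by exists (size (chain_circuit PS)), (chain_circuit PS).
- by move=> k [c [wf_c f2 /computes_sum_supports ? <-]]; apply: size_lb.
Qed.

Unset Implicit Arguments.

Theorem theorem4 (R : realType) (C : R) (Q : nat) (L : complexity)
    (LL : forall n : nat, {set {set pixel n}}) :
  0 < C ->
  (forall n : nat, (0 < n)%N -> strip_pattern_set C Q (LL n)) ->
  (* |L_n| = Theta(n^2) *)
  (exists c1 c2 : R, [/\ 0 < c1, 0 < c2 & exists N : nat, forall n : nat, (N <= n)%N ->
      c1 * (n%:R) ^+ 2 <= (#|LL n|)%:R /\ (#|LL n|)%:R <= c2 * (n%:R) ^+ 2]) ->
  (* V(L_n) = Omega(n^3) *)
  (exists c3 : R, 0 < c3 /\ exists N : nat, forall n : nat, (N <= n)%N ->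
      c3 * (n%:R) ^+ 3 <= (volume (LL n))%:R) ->
  (* L(L_n) = Omega(n^2 log n) *)
  exists c : R, 0 < c /\ exists N : nat, forall n : nat, (N <= n)%N ->
      c * (n%:R) ^+ 2 * ln (n%:R) <= (cost L (LL n))%:R.
Proof.
move=> C_gt0 LL_strip [c1 [c2 [_ c2_gt0 [N2 card_LL]]]] [c3 [c3_gt0 [N3 vol_LL]]].
set D := Q.+1%:R * (2 * (2 * C + 1) ^+ 2).
have D_gt0 : 0 < D by rewrite mulr_gt0 ?ltr0n // mulr_gt0 ?exprn_gt0 //; lra.
have alpha2_gt0 : 0 < (c3 / (2 * c2)) ^+ 2 by rewrite exprn_gt0 // divr_gt0 // mulr_gt0.
exists (c3 / (8 * D)); split; first by rewrite divr_gt0 // mulr_gt0.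
exists (maxn (Num.Def.archi_bound ((c3 / (2 * c2)) ^+ 2)^-1) (maxn N2 N3)) => n.
rewrite !geq_max => /and3P[/(mul_ge1_archi_bound alpha2_gt0) n_large n_N2 n_N3].
have [_ card_le] := card_LL n n_N2.
have LLn_strip := LL_strip n (nat_gt0_of_mul_ge1 n_large).
apply: cost_ge => [|c wf_c c_LL]; first by case: LLn_strip.
have -> : 2 * (c3 / (8 * D) * n%:R ^+ 2 * ln n%:R) = c3 / (4 * D) * n%:R ^+ 2 * ln n%:R.
  by field; rewrite gt_eqF.
exact: csize_ge_sq_ln LLn_strip card_le (vol_LL n n_N3) wf_c c_LL.
Qed.
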